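(* Let $N=\{1,\ldots,n\}$ and $\mathcal{X}=\{-1,1\}^n$. A deterministic voting rule $\phi:\mathcal{X}\to\{-1,1\}$ is weakly robust and anonymous if and only if it is an anonymous simple majority rule, i.e. a rule satisfying $\phi(x)=1$ whenever $\sum_ix_i>0$ and $\phi(x)=-1$ whenever $\sum_ix_i<0$, whose values on ties $\sum_ix_i=0$ are such that $\phi$ is anonymous.
   Context: $\phi$ is anonymous if $\phi(x)=\phi((x_{\pi(i)})_{i\in N})$ for all $x$ and all permutations $\pi$ of $N$. Responsiveness: $r_i(\phi,p)=p(\{x:\phi(x)=x_i\})$ for $p\in\Delta(\mathcal{X})$ (probability distributions on $\mathcal{X}$). $\phi$ is weakly robust if for every $p\in\Delta(\mathcal{X})$ there is some $i\in N$ with $r_i(\phi,p)\geq1/2$. *)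

From HB Require Import structures.
From mathcomp Require Import all_boot all_order all_algebra all_fingroup.
From mathcomp Require Import reals.
Set Implicit Arguments. Unset Strict Implicit. Unset Printing Implicit Defensive.
Import Order.TTheory GRing.Theory Num.Theory.
Local Open Scope ring_scope.

(* N = {1,...,n} is represented by 'I_n; a vote in {-1,1} by a bool,
   with true = 1 and false = -1. *)
Definition profile (n : nat) := {ffun 'I_n -> bool}.

Definition vote_val (b : bool) : int := if b then 1 else -1.

Definition rule (n : nat) := profile n -> bool.

Definition anonymous (n : nat) (phi : rule n) : Prop :=
  forall (x : profile n) (pi : 'S_n), phi x = phi [ffun i => x (pi i)].

Definition is_distribution (R : realType) (n : nat) (p : profile n -> R) : Prop :=
  (forall x, 0 <= p x) /\ \sum_(x : profile n) p x = 1.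

Definition responsiveness (R : realType) (n : nat) (phi : rule n) (p : profile n -> R)
  (i : 'I_n) : R :=
  \sum_(x : profile n | phi x == x i) p x.

Definition weakly_robust (R : realType) (n : nat) (phi : rule n) : Prop :=
  forall p : profile n -> R, is_distribution p ->
    exists i : 'I_n, 1 / 2 <= responsiveness phi p i.

Definition simple_majority (n : nat) (phi : rule n) : Prop :=
  forall x : profile n,
    (0 < \sum_(i < n) vote_val (x i) -> phi x = true) /\
    (\sum_(i < n) vote_val (x i) < 0 -> phi x = false).

Definition anonymous_simple_majority (n : nat) (phi : rule n) : Prop :=
  simple_majority phi /\ anonymous phi.

(* Both properties are equivalent to asking that, on every profile x, at least
   half of the voters agree with phi x.  The responsivenesses sum to the
   expected number of voters agreeing with the outcome, so if that number is
   always at least n/2, some voter has responsiveness at least 1/2.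
   Conversely, if phi is anonymous, then under the uniform distribution on the
   permutations of a fixed profile x every voter has responsiveness exactly
   (number of voters agreeing with phi x)/n, and weak robustness forces this
   to be at least 1/2. *)

From HB Require Import structures.
From mathcomp Require Import all_boot all_order all_algebra all_fingroup.
From mathcomp Require Import reals.
From mathcomp Require Import zify lra.

Set Implicit Arguments. Unset Strict Implicit. Unset Printing Implicit Defensive.
Import Order.TTheory GRing.Theory Num.Theory.
Local Open Scope ring_scope.

Lemma exists_ge_of_sum_ge (R : realDomainType) (I : finType) (F : I -> R) (c : R) :
  (0 < #|I|)%N -> c *+ #|I| <= \sum_i F i -> exists i, c <= F i.
Proof.
move=> /card_gt0P[i0 _] le_sum.
have [/existsP // | /existsPn F_lt] := boolP [exists i, c <= F i].
suff : \sum_i F i < c *+ #|I| by rewrite ltNge le_sum.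
rewrite -sumr_const; apply: ltr_sum => [|i _]; last by rewrite ltNge F_lt.
by apply/hasP; exists i0; rewrite ?mem_index_enum.
Qed.

Lemma sum_perm_eval (V : nmodType) (T : finType) (F : T -> V) (t : T) :
  (\sum_(s : {perm T}) F (s t)) *+ #|T| = (\sum_u F u) *+ #|{perm T}|.
Proof.
have eval_shift u : \sum_(s : {perm T}) F (s t) = \sum_(s : {perm T}) F (s u).
  rewrite (reindex_inj (mulgI (tperm t u))) /=.
  by apply: eq_bigr => s _; rewrite permM tpermL.
rewrite -!sumr_const (eq_bigr _ (fun u _ => eval_shift u)) exchange_big /=.
apply: eq_bigr => s _.
by rewrite (reindex_inj (@perm_inj _ s^-1)); apply: eq_bigr => u _; rewrite permKV.
Qed.

Lemma card_perm_gt0 (T : finType) : (0 < #|{perm T}|)%N.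
Proof. by apply/card_gt0P; exists 1%g. Qed.

Section Agreement.
Variable n : nat.

Definition agree (x : profile n) (b : bool) : nat := (\sum_(i < n) (x i == b))%N.

Lemma agree_true_false (x : profile n) : (agree x true + agree x false)%N = n.
Proof.
rewrite -big_split /= -[n in RHS]card_ord -sum1_card.
by apply: eq_bigr => i _; case: (x i).
Qed.

Lemma sum_vote_val (x : profile n) :
  \sum_(i < n) vote_val (x i) = (agree x true)%:Z - (agree x false)%:Z.
Proof.
rewrite -!natz !natr_sum -sumrB.
by apply: eq_bigr => i _; case: (x i).
Qed.

Lemma simple_majorityP (phi : rule n) :
  simple_majority phi <-> forall x, (n <= 2 * agree x (phi x))%N.
Proof.
split=> [maj x | agree_maj x]; have := agree_true_false x.
- have [pos neg] := maj x; rewrite sum_vote_val in pos neg.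
  have [s_lt0 | s_gt0 | s_eq0] := ltrgtP ((agree x true)%:Z - (agree x false)%:Z) 0.
  + by rewrite (neg s_lt0); lia.
  + by rewrite (pos s_gt0); lia.
  + by case: (phi x); lia.
- rewrite sum_vote_val; have := agree_maj x.
  by case: (phi x); split=> //; lia.
Qed.

End Agreement.

Section Robustness.
Variables (R : realType) (n : nat).
Implicit Types (phi : rule n) (p : profile n -> R).

Lemma sum_responsiveness phi p :
  \sum_(i < n) responsiveness phi p i = \sum_x (agree x (phi x))%:R * p x.
Proof.
rewrite /responsiveness; under eq_bigr do rewrite big_mkcond.
rewrite exchange_big /=; apply: eq_bigr => x _.
rewrite natr_sum mulr_suml; apply: eq_bigr => i _.
by rewrite eq_sym; case: (_ == _); rewrite ?mul1r ?mul0r.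
Qed.

Lemma weakly_robust_of_agree phi : (0 < n)%N ->
  (forall x, (n <= 2 * agree x (phi x))%N) -> weakly_robust R phi.
Proof.
move=> n_gt0 agree_maj p [p_ge0 p_sum1].
apply: exists_ge_of_sum_ge; rewrite ?card_ord // sum_responsiveness.
have -> : (1 / 2 : R) *+ n = \sum_x n%:R / 2 * p x.
  by rewrite -mulr_sumr p_sum1 -mulr_natr; lra.
apply: ler_sum => x _; rewrite ler_wpM2r // ler_pdivrMr // -natrM ler_nat mulnC.
exact: agree_maj.
Qed.

Section ImageLaw.
Variables (S : finType) (f : S -> profile n).

Definition image_law (y : profile n) : R := #|S|%:R^-1 * \sum_s (f s == y)%:R.

Lemma sum_image_law (P : pred (profile n)) :
  \sum_(y | P y) image_law y = #|S|%:R^-1 * \sum_s (P (f s))%:R.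
Proof.
rewrite -mulr_sumr exchange_big /=; congr (_ * _); apply: eq_bigr => s _.
rewrite big_mkcond (bigD1 (f s)) //= eqxx big1 ?addr0 => [|y /negbTE y_neq].
  by case: (P (f s)).
by rewrite eq_sym y_neq; case: (P y).
Qed.

Lemma image_law_distribution : (0 < #|S|)%N -> is_distribution image_law.
Proof.
move=> S_gt0; split=> [y | ].
  by rewrite mulr_ge0 ?sumr_ge0 ?invr_ge0.
rewrite (eq_bigl predT) // sum_image_law sumr_const.
by rewrite mulVf // pnatr_eq0 -lt0n.
Qed.

End ImageLaw.

Definition permuted (x : profile n) (s : {perm 'I_n}) : profile n := [ffun i => x (s i)].

Lemma responsiveness_permuted phi x i : anonymous phi ->
  n%:R * responsiveness phi (image_law (permuted x)) i = (agree x (phi x))%:R.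
Proof.
move=> anon; rewrite /responsiveness sum_image_law.
under eq_bigr do rewrite -anon ffunE.
have := sum_perm_eval (fun u => (phi x == x u)%:R : R) i; rewrite card_ord.
rewrite mulrCA mulr_natl => ->.
rewrite mulrnAr -mulr_natl mulrA mulfV ?mul1r ?pnatr_eq0 -?lt0n ?card_perm_gt0 //.
by rewrite natr_sum; apply: eq_bigr => u _; rewrite eq_sym.
Qed.

Lemma agree_of_weakly_robust phi : weakly_robust R phi -> anonymous phi ->
  forall x, (n <= 2 * agree x (phi x))%N.
Proof.
move=> robust anon x.
have [|i half_le] := robust (image_law (permuted x)).
  exact/image_law_distribution/card_perm_gt0.
rewrite -(ler_nat R) natrM -(responsiveness_permuted x i anon).
have := ler_wpM2l (ler0n R n) half_le; lra.
Qed.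

End Robustness.

Theorem corollary3 (R : realType) (n : nat) (hn : (0 < n)%N) (phi : rule n) :
  (weakly_robust R phi /\ anonymous phi) <-> anonymous_simple_majority phi.
Proof.
rewrite /anonymous_simple_majority simple_majorityP.
split=> [[robust anon] | [maj anon]]; split=> //.
- exact: agree_of_weakly_robust robust anon.
- exact: weakly_robust_of_agree.
Qed.
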